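(* In an instance of the large-market pricing problem described in the context with uniform peak $\lambda_i(0)=\lambda^{max}$, fix $k\ge1$, a set $B_1$ of buyer types and a set $S_1$ of items. Suppose that when all items of $S_1$ are priced at $p$, with $(\vec x^a,\vec y^a)$ the best-response demand of the buyer types in $B_1$ together with a corresponding min-cost allocation using only items of $S_1$, some item $t\in S_1$ satisfies $p-c_t(y^a_t)\ge\frac1k(\lambda^{max}-c_t(y^a_t))$. Let $p_2\ge p$ and let $(\vec x^b,\vec y^b)$ be the min-cost best-response solution when all items of $S_1$ are priced at $p_2$. Then $p_2-c_t(y^b_t)\ge\frac1k(\lambda^{max}-c_t(y^b_t))$.
   Context: Finite item set $S$, finite set $B$ of buyer types, bipartite graph $G=(B\cup S,E)$, $S_i=\{t:(i,t)\in E\}$. Buyer type $i$ has inverse demand $\lambda_i:[0,T_i]\to\mathbb{R}_{\ge0}$, non-increasing, continuously differentiable on $(0,T_i)$, with monotone hazard rate ($\lambda_i'/\lambda_i$ non-increasing), $\lambda_i(0)=\lambda^{max}$. Item $t$ has convex continuously differentiable production cost $C_t$ with derivative $c_t$. When all items available to buyer type $i$ have price $q$, its best-response demand $x_i$ satisfies $\lambda_i(x_i)=q$. A feasible allocation for demand $\vec x$ is $y_t(i)\ge0$ ($>0$ only if $(i,t)\in E$) with $\sum_ty_t(i)=x_i$, $y_t=\sum_iy_t(i)$; a min-cost allocation minimizes $\sum_tC_t(y_t)$ among feasible ones. *)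

From HB Require Import structures.
From mathcomp Require Import all_boot all_order all_algebra.
From mathcomp Require Import all_classical all_reals all_analysis.
Set Implicit Arguments. Unset Strict Implicit. Unset Printing Implicit Defensive.
Import Order.TTheory GRing.Theory Num.Theory.
Import numFieldNormedType.Exports.
Local Open Scope classical_set_scope.
Local Open Scope ring_scope.

Section Market.
Variables (R : realType) (B S : finType).

Definition inverse_demand (T lmax : R) (lam : R -> R) : Prop :=
  [/\ 0 < T /\ lam 0 = lmax,
      (forall x, 0 <= x <= T -> 0 <= lam x),
      (forall x y, 0 <= x -> x <= y -> y <= T -> lam y <= lam x),
      (forall x, 0 < x < T -> derivable lam x 1 /\ {for x, continuous (derive1 lam)}) &
      (forall x y, 0 < x -> x <= y -> y < T -> 0 < lam x -> 0 < lam y ->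
         derive1 lam y / lam y <= derive1 lam x / lam x)].

Definition production_cost (C c : R -> R) : Prop :=
  [/\ (forall x y a, 0 <= x -> 0 <= y -> 0 <= a <= 1 ->
         C (a * x + (1 - a) * y) <= a * C x + (1 - a) * C y),
      (forall y : R, 0 < y -> is_derive y (1 : R) C (c y)),
      {within `[0, +oo[, continuous C} &
      {within `[0, +oo[, continuous c}].

Definition best_response (B1 : {set B}) (T : B -> R) (lam : B -> R -> R)
    (q : R) (x : B -> R) : Prop :=
  forall i, i \in B1 -> 0 <= x i <= T i /\ lam i (x i) = q.

Definition feasible_alloc (E : B -> S -> bool) (B1 : {set B}) (S1 : {set S})
    (x : B -> R) (y : B -> S -> R) : Prop :=
  [/\ (forall i t, 0 <= y i t),
      (forall i t, y i t != 0 -> [&& i \in B1, t \in S1 & E i t]) &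
      (forall i, i \in B1 -> \sum_(t : S) y i t = x i)].

(* total production y_t = sum_i y_t(i) *)
Definition load (y : B -> S -> R) (t : S) : R := \sum_(i : B) y i t.

Definition alloc_cost (C : S -> R -> R) (S1 : {set S}) (y : B -> S -> R) : R :=
  \sum_(t in S1) C t (load y t).

Definition min_cost_alloc (E : B -> S -> bool) (C : S -> R -> R)
    (B1 : {set B}) (S1 : {set S}) (x : B -> R) (y : B -> S -> R) : Prop :=
  feasible_alloc E B1 S1 x y /\
  (forall y', feasible_alloc E B1 S1 x y' -> alloc_cost C S1 y <= alloc_cost C S1 y').

End Market.

(* Raising the price lowers every buyer's demand, since inverse demands are
   non-increasing.  Lowering demands cannot raise the marginal cost c_t(y_t) of
   any item in a min-cost allocation.  Indeed, a min-cost allocation equalizes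
   marginal costs along the edges it uses: moving a little of buyer i's mass
   from s to u is feasible, and by the mean value theorem it changes the cost
   by that mass times a difference of marginal costs at nearby loads.  If the
   set U of items whose marginal cost rose were nonempty, their loads rose as
   well (c is non-decreasing because C is convex), so some buyer moved mass
   into U and out of its complement, and the equalization conditions of the
   two allocations along these two edges contradict each other.  With a higher
   price and a lower marginal cost the margin condition
   p - c >= (lmax - c)/k only improves, as 1/k <= 1. *)

From HB Require Import structures.
From mathcomp Require Import all_boot all_order all_algebra.
From mathcomp Require Import all_classical all_reals all_analysis.
From mathcomp Require Import ring lra.
Import Order.TTheory GRing.Theory Num.Theory.
Import numFieldNormedType.Exports.
Local Open Scope classical_set_scope.
Local Open Scope ring_scope.

Lemma continuous_within_nonneg {R : realType} {f : R -> R} {x eta : R} :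
  {within `[0, +oo[, continuous f} -> 0 <= x -> 0 < eta ->
  exists2 d : R, 0 < d & forall z, 0 <= z -> `|x - z| < d -> `|f x - f z| < eta.
Proof.
move=> /subspace_continuousP cf x0 eta0.
have xA : `[0, +oo[%classic x by rewrite /= in_itv /= x0.
move: (cf x xA) => /cvgrPdist_lt /(_ _ eta0).
rewrite near_withinE => /nbhs_ballP [d d0 Hd].
by exists d => // z z0 xz; apply: (Hd z) => //; rewrite /= in_itv /= z0.
Qed.

Lemma le_continuous_approx {R : realType} {f g : R -> R} {x y d0 : R} :
  {within `[0, +oo[, continuous f} -> {within `[0, +oo[, continuous g} ->
  0 <= x -> 0 <= y -> 0 < d0 ->
  (forall d, 0 < d < d0 -> exists z1 z2,
     [/\ 0 <= z1, 0 <= z2, `|x - z1| < d, `|y - z2| < d & f z1 <= g z2]) ->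
  f x <= g y.
Proof.
move=> cf cg x0 y0 d00 approx; rewrite leNgt; apply/negP => gf.
pose eta := (f x - g y) / 2.
have eta0 : 0 < eta by rewrite /eta; lra.
have [d1 d10 near_f] := continuous_within_nonneg cf x0 eta0.
have [d2 d20 near_g] := continuous_within_nonneg cg y0 eta0.
pose m := Num.min (Num.min d1 d2) d0.
have [md1 md2 md0 m0] : [/\ m <= d1, m <= d2, m <= d0 & 0 < m].
  by rewrite !ge_min !lt_min d10 d20 d00 !lexx /= !orbT.
pose d := m / 2.
have [z1 [z2 [z10 z20 xz1 yz2 fg]]] :=
  approx d ltac:(rewrite /d; apply/andP; split; lra).
have := near_f z1 z10 ltac:(rewrite /d in xz1; lra).
have := near_g z2 z20 ltac:(rewrite /d in yz2; lra).
rewrite /eta !ltr_norml; lra.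
Qed.

Section ConvexCost.
Context {R : realType} {C c : R -> R}.
Hypothesis HC : production_cost C c.

Lemma cost_mvt {a b : R} : 0 <= a -> a < b ->
  exists2 z, a < z < b & C b - C a = c z * (b - a).
Proof.
have [_ dC contC _] := HC; move=> a0 ab.
have hd x : x \in `]a, b[ -> is_derive x 1 C (c x).
  by rewrite in_itv /= => /andP[ax _]; apply: dC; exact: le_lt_trans ax.
have hc : {within `[a, b], continuous C}.
  apply: continuous_subspaceW contC => x /=; rewrite !in_itv /= => /andP[ax _].
  by rewrite andbT (le_trans a0 ax).
have [z zab ->] := MVT ab hd hc.
by exists z => //; move: zab; rewrite in_itv.
Qed.

Lemma cost_chord {x z y : R} : 0 <= x -> x < z -> z < y ->
  (y - x) * C z <= (y - z) * C x + (z - x) * C y.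
Proof.
have [convC _ _ _] := HC; move=> x0 xz zy.
pose a := (y - z) / (y - x).
have a01 : 0 <= a <= 1.
  rewrite /a; apply/andP; split; first by apply: divr_ge0; lra.
  by rewrite ler_pdivrMr; lra.
have za : a * x + (1 - a) * y = z by rewrite /a; field; lra.
have := convC x y a x0 ltac:(lra) a01; rewrite za => H.
have -> : (y - z) * C x + (z - x) * C y = (y - x) * (a * C x + (1 - a) * C y).
  by rewrite /a; field; lra.
by rewrite ler_pM2l; lra.
Qed.

Lemma cost_increment_le {x y h : R} : 0 <= x -> 0 < h -> h < y - x ->
  C (x + h) - C x <= C y - C (y - h).
Proof.
move=> x0 h0 hyx.
have c1 := cost_chord x0 (_ : x < x + h) (_ : x + h < y).
have c2 := cost_chord x0 (_ : x < y - h) (_ : y - h < y).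
move: c1 c2 => /(_ ltac:(lra) ltac:(lra)) c1 /(_ ltac:(lra) ltac:(lra)) c2.
have : (y - x) * ((C (x + h) - C x) - (C y - C (y - h))) <= 0 by nra.
by rewrite pmulr_rle0; lra.
Qed.

Lemma marginal_cost_mono (x y : R) : 0 <= x -> x <= y -> c x <= c y.
Proof.
have [_ _ _ contc] := HC; move=> x0 xy.
have [-> //|xy'] := eqVneq x y.
have {xy'} xy : x < y by rewrite lt_neqAle xy' xy.
have y0 : 0 <= y by lra.
have yx0 : 0 < y - x by lra.
apply: (le_continuous_approx contc contc x0 y0 yx0) => d /andP[d0 dyx].
have [xxd yd0 ydy] : [/\ x < x + d, 0 <= y - d & y - d < y] by split; lra.
have [z1 /andP[xz1 z1x] Ez1] := cost_mvt x0 xxd.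
have [z2 /andP[yz2 z2y] Ez2] := cost_mvt yd0 ydy.
exists z1, z2; split; try (rewrite ltr_norml; apply/andP; split); try lra.
have := cost_increment_le x0 d0 dyx.
by rewrite Ez1 Ez2 addrAC subrr add0r opprB addrC subrK ler_pM2r.
Qed.

End ConvexCost.

Lemma sum_ltr_exists {R : realDomainType} {I : finType} {P : pred I} {F G : I -> R} :
  \sum_(i | P i) F i < \sum_(i | P i) G i -> exists2 i, P i & F i < G i.
Proof.
move=> FG; apply/exists_inP; apply: contraTT FG => /exists_inPn FG.
by rewrite -leNgt; apply: ler_sum => i /FG; rewrite -leNgt.
Qed.

Lemma sum_indicator_mul {R : pzSemiRingType} {I : finType} (u : I) (a : R) :
  \sum_(v : I) (v == u)%:R * a = a.
Proof.
rewrite (bigD1 u) //= eqxx mul1r big1 ?addr0 // => v /negbTE ->.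
by rewrite mul0r.
Qed.

Section Allocation.
Context {R : realType} {B S : finType} {E : B -> S -> bool}.
Context {C c : S -> R -> R} {B1 : {set B}} {S1 : {set S}}.
Hypothesis HC : forall t, production_cost (C t) (c t).

Lemma load_ge0 (y : B -> S -> R) s : (forall i t, 0 <= y i t) -> 0 <= load y s.
Proof. by move=> y0; apply: sumr_ge0. Qed.

Lemma ler_load (y : B -> S -> R) i s : (forall i t, 0 <= y i t) -> y i s <= load y s.
Proof.
move=> y0; rewrite /load (bigD1 i) //= lerDl.
exact: sumr_ge0.
Qed.

Lemma feasible_alloc_out {x : B -> R} {y j s} :
  feasible_alloc E B1 S1 x y -> j \notin B1 -> y j s = 0.
Proof. by move=> [_ ysupp _] jB; apply/eqP; apply: contraNT jB => /ysupp /and3P[]. Qed.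

Definition shift_alloc (y : B -> S -> R) (i : B) (s u : S) (e : R) :=
  fun j v => y j v + (j == i)%:R * ((v == u)%:R * e - (v == s)%:R * e).

Lemma load_shift_alloc (y : B -> S -> R) i s u e v :
  load (shift_alloc y i s u e) v = load y v + ((v == u)%:R * e - (v == s)%:R * e).
Proof. by rewrite /load /shift_alloc big_split /= sum_indicator_mul. Qed.

Lemma feasible_shift_alloc {x : B -> R} {y i s u e} :
  feasible_alloc E B1 S1 x y -> 0 < y i s -> 0 <= e <= y i s ->
  u \in S1 -> E i u -> s != u ->
  feasible_alloc E B1 S1 x (shift_alloc y i s u e).
Proof.
move=> [y0 ysupp ysum] yis /andP[e0 eys] uS Eiu su.
have /and3P[iB sS Eis] := ysupp i s (lt0r_neq0 yis).
rewrite /shift_alloc; split.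
- move=> j v; have [->|_] := eqVneq j i; last by rewrite mul0r addr0.
  rewrite mul1r; have [->|vs] := eqVneq v s.
    by rewrite (negbTE su) mul0r mul1r; lra.
  have [->|vu] := eqVneq v u; first by rewrite mul1r mul0r; have := y0 i u; lra.
  by rewrite !mul0r subrr addr0.
- move=> j v; have [->|_] := eqVneq j i; last by rewrite mul0r addr0; exact: ysupp.
  have [->|vs] := eqVneq v s; first by rewrite iB sS Eis.
  have [->|vu] := eqVneq v u; first by rewrite iB uS Eiu.
  by rewrite !mul0r subrr mulr0 addr0; exact: ysupp.
- move=> j jB; rewrite big_split /= -mulr_sumr sumrB !sum_indicator_mul.
  by rewrite subrr mulr0 addr0 ysum.
Qed.

Lemma alloc_cost_shift_alloc (y : B -> S -> R) i s u e :
  s \in S1 -> u \in S1 -> s != u ->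
  alloc_cost C S1 (shift_alloc y i s u e) - alloc_cost C S1 y =
  (C s (load y s - e) - C s (load y s)) + (C u (load y u + e) - C u (load y u)).
Proof.
move=> sS uS su; rewrite /alloc_cost -sumrB (bigD1 s) //= (bigD1 u) /=; last first.
  by rewrite uS eq_sym su.
rewrite big1 => [|v /andP[/andP[_ vs] vu]]; last first.
  by rewrite load_shift_alloc (negbTE vs) (negbTE vu) !mul0r subrr addr0 subrr.
by rewrite !load_shift_alloc !eqxx (negbTE su) eq_sym (negbTE su) !mul0r !mul1r
  sub0r subr0 addr0.
Qed.

Lemma min_cost_alloc_marginal {x : B -> R} {y i s u} :
  min_cost_alloc E C B1 S1 x y -> 0 < y i s -> u \in S1 -> E i u ->
  c s (load y s) <= c u (load y u).
Proof.
move=> [feas ymin] yis uS Eiu.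
have [->//|su] := eqVneq s u.
have [y0 ysupp _] := feas.
have /and3P[_ sS _] := ysupp i s (lt0r_neq0 yis).
set Ls := load y s; set Lu := load y u.
have Lsy : y i s <= Ls := ler_load y i s y0.
have Lu0 : 0 <= Lu := load_ge0 y u y0.
have [_ _ _ contcs] := HC s; have [_ _ _ contcu] := HC u.
apply: (le_continuous_approx contcs contcu (_ : 0 <= Ls) Lu0 yis); first lra.
move=> d /andP[d0 dys].
have [Lsd0 Lsd Lud] : [/\ 0 <= Ls - d, Ls - d < Ls & Lu < Lu + d] by split; lra.
have [z1 /andP[z1l z1r] Ez1] := cost_mvt (HC s) Lsd0 Lsd.
have [z2 /andP[z2l z2r] Ez2] := cost_mvt (HC u) Lu0 Lud.
exists z1, z2; split; try (rewrite ltr_norml; apply/andP; split); try lra.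
have shift_feas := feasible_shift_alloc feas yis (_ : 0 <= d <= y i s) uS Eiu su.
have := ymin _ (shift_feas ltac:(apply/andP; split; lra)).
rewrite -subr_ge0 alloc_cost_shift_alloc // -/Ls -/Lu.
have -> : C s (Ls - d) - C s Ls = - (c s z1 * d).
  by rewrite -opprB Ez1; congr (- (_ * _)); ring.
have -> : C u (Lu + d) - C u Lu = c u z2 * d by rewrite Ez2; congr (_ * _); ring.
by rewrite addrC subr_ge0 ler_pM2r.
Qed.

Lemma min_cost_alloc_marginal_mono {xa xb : B -> R} {ya yb t} : t \in S1 ->
  min_cost_alloc E C B1 S1 xa ya -> min_cost_alloc E C B1 S1 xb yb ->
  (forall i, i \in B1 -> xb i <= xa i) ->
  c t (load yb t) <= c t (load ya t).
Proof.
move=> tS Ha Hb xba; rewrite leNgt; apply/negP => ct_lt.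
have [[ya0 yasupp yasum] _] := Ha; have [[yb0 ybsupp ybsum] _] := Hb.
pose U := [set s in S1 | c s (load ya s) < c s (load yb s)].
have tU : t \in U by rewrite inE tS ct_lt.
have loadU s : s \in U -> load ya s < load yb s.
  rewrite inE => /andP[_]; apply: contraTT; rewrite -!leNgt.
  exact/marginal_cost_mono/load_ge0.
have sumU : \sum_(s in U) load ya s < \sum_(s in U) load yb s.
  rewrite (bigD1 t) //= [X in _ < X](bigD1 t) //=.
  apply: ltr_leD; first exact: loadU.
  by apply: ler_sum => s /andP[sU _]; apply/ltW/loadU.
have [j _ Uj] : exists2 j, true & \sum_(s in U) ya j s < \sum_(s in U) yb j s.
  apply: sum_ltr_exists; move: sumU; rewrite /load.
  by rewrite (exchange_big _ _ _ (mem U)) [X in _ < X -> _](exchange_big _ _ _ (mem U)).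
have jB : j \in B1.
  apply: contraLR Uj => jB; rewrite -leNgt !big1 // => s _.
  - exact: (feasible_alloc_out Ha.1 jB).
  - exact: (feasible_alloc_out Hb.1 jB).
have [u uU yju] : exists2 u, u \notin U & yb j u < ya j u.
  apply: sum_ltr_exists; have := xba j jB.
  rewrite -(yasum j jB) -(ybsum j jB) (bigID (mem U)) [X in _ <= X](bigID (mem U)) /=.
  by move: Uj; lra.
have [s sU yjs] := sum_ltr_exists Uj.
have /and3P[_ uS Eju] := yasupp j u (lt0r_neq0 (le_lt_trans (yb0 j u) yju)).
have /and3P[_ sS Ejs] := ybsupp j s (lt0r_neq0 (le_lt_trans (ya0 j s) yjs)).
have hb := min_cost_alloc_marginal Hb (le_lt_trans (ya0 j s) yjs) uS Eju.
have ha := min_cost_alloc_marginal Ha (le_lt_trans (yb0 j u) yju) sS Ejs.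
move: sU uU; rewrite !inE sS uS /= -leNgt; lra.
Qed.

End Allocation.

Lemma best_response_antitone {R : realType} {B : finType} (B1 : {set B})
    (T : B -> R) (lam : B -> R -> R) (lmax p p2 : R) (xa xb : B -> R) :
  (forall i, inverse_demand (T i) lmax (lam i)) ->
  best_response B1 T lam p xa -> best_response B1 T lam p2 xb -> p < p2 ->
  forall i, i \in B1 -> xb i <= xa i.
Proof.
move=> Hlam Ha Hb pp2 i iB; rewrite leNgt; apply/negP => xab.
have [[/andP[xa0 _] lam_a] [/andP[_ xbT] lam_b]] := (Ha i iB, Hb i iB).
have [_ _ lam_mono _ _] := Hlam i.
by have := lam_mono _ _ xa0 (ltW xab) xbT; rewrite lam_a lam_b leNgt pp2.
Qed.

Lemma markup_ge_mono {R : realFieldType} (k lmax p p' c c' : R) :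
  1 <= k -> k^-1 * (lmax - c) <= p - c -> p <= p' -> c' <= c ->
  k^-1 * (lmax - c') <= p' - c'.
Proof.
move=> k1 markup pp' cc'.
have k_inv_le1 : k^-1 <= 1 by rewrite invr_le1 // ?unitfE; lra.
have k_inv_ge0 : 0 <= k^-1 by rewrite invr_ge0; lra.
have : k^-1 * (c - c') <= c - c' by rewrite ler_piMl //; lra.
by rewrite mulrBr; move: markup; rewrite mulrBr; lra.
Qed.

Theorem lemma4 (R : realType) (B S : finType) (E : B -> S -> bool)
    (T : B -> R) (lam : B -> R -> R) (lmax : R)
    (C c : S -> R -> R)
    (Hlam : forall i, inverse_demand (T i) lmax (lam i))
    (HC : forall t, production_cost (C t) (c t))
    (k : R) (Hk : 1 <= k)
    (B1 : {set B}) (S1 : {set S})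
    (p p2 : R) (demand : R -> B -> R)
    (ya yb : B -> S -> R) (t : S)
    (Hxa : best_response B1 T lam p (demand p))
    (Hya : min_cost_alloc E C B1 S1 (demand p) ya)
    (Ht : t \in S1)
    (Hpt : p - c t (load ya t) >= k^-1 * (lmax - c t (load ya t)))
    (Hp2 : p <= p2)
    (Hxb : best_response B1 T lam p2 (demand p2))
    (Hyb : min_cost_alloc E C B1 S1 (demand p2) yb) :
  p2 - c t (load yb t) >= k^-1 * (lmax - c t (load yb t)).
Proof.
have demand_le : forall i, i \in B1 -> demand p2 i <= demand p i.
  have [<- //|pp2] := eqVneq p p2.
  by apply: best_response_antitone Hlam Hxa Hxb _; rewrite lt_neqAle pp2.
apply: markup_ge_mono Hk Hpt Hp2 _.
exact: (min_cost_alloc_marginal_mono HC Ht Hya Hyb demand_le).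
Qed.
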